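(* Let $\mu$ be a monotone system over $\{0,1\}^V$ and $\theta\in(0,1)$. Then the lifted distribution $\pi$ is a monotone system over $\{0,1,\star\}^V$, and consequently the Glauber dynamics $P_{\pi\text{-GD}}$ on $\pi$ is stochastically monotone.
   Context: Monotone system (over $\{0,1\}^V$): for every $v$ and all feasible (positive probability) $\sigma\preceq\tau$ in $\{0,1\}^{V\setminus\{v\}}$ (coordinatewise), $\mu^\sigma_v(1)\le\mu^\tau_v(1)$, $\mu^\sigma_v$ being the conditional marginal. $\mathsf{lift}:\{0,1\}^V\to\{0,1,\star\}^V$ is random: independently per coordinate, $0\mapsto0$, $1\mapsto\star$ w.p. $1-\theta$, $1\mapsto1$ w.p. $\theta$; $\pi$ is the law of $\mathsf{lift}(X)$ for $X\sim\mu$, support $\Omega(\pi)$. Order $0<1<\star$ and coordinatewise partial order on $\{0,1,\star\}^V$. A distribution $\pi$ over $\{0,1,\star\}^V$ is a monotone system if for every $i\in V$ and all feasible comparable $\sigma\preceq\tau$ in $\{0,1,\star\}^{V\setminus\{i\}}$, there is a coupling $(x,y)$ of the conditional marginals $\pi^\sigma_i,\pi^\tau_i$ with $x\le y$ a.s. $P_{\pi\text{-GD}}$: pick $v$ uniformly, resample $X_v$ from $\pi$ given $X_{V\setminus\{v\}}$. A chain $P$ on $\Omega(\pi)$ is stochastically monotone if $Pf$ is increasing for every increasing $f:\Omega(\pi)\to\mathbb R_{\ge0}$ (increasing: $X\preceq Y\Rightarrow f(X)\le f(Y)$). *)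

From HB Require Import structures.
From mathcomp Require Import all_boot all_order all_algebra.
Set Implicit Arguments. Unset Strict Implicit. Unset Printing Implicit Defensive.
Import Order.TTheory GRing.Theory Num.Theory.
Local Open Scope ring_scope.

Inductive spin3 := S0 | S1 | Sstar.

Definition spin3_code (s : spin3) : 'I_3 :=
  match s with S0 => inord 0 | S1 => inord 1 | Sstar => inord 2 end.
Definition spin3_decode (i : 'I_3) : spin3 :=
  match val i with 0%N => S0 | 1%N => S1 | _ => Sstar end.
Lemma spin3_codeK : cancel spin3_code spin3_decode.
Proof. by case; rewrite /spin3_decode /= inordK. Qed.
HB.instance Definition _ := Finite.copy spin3 (can_type spin3_codeK).

Definition rank3 (s : spin3) : nat :=
  match s with S0 => 0 | S1 => 1 | Sstar => 2 end.
Definition le3 (a b : spin3) : bool := (rank3 a <= rank3 b)%N.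

Section Spin.
Variables (R : realFieldType) (V A : finType).

Definition is_distr (p : {ffun V -> A} -> R) : Prop :=
  (forall x, 0 <= p x) /\ \sum_x p x = 1.

(* x and s agree on V \ {v}: a configuration s on V\{v} is represented by any
   full configuration, its value at v being irrelevant *)
Definition agree_off (v : V) (x s : {ffun V -> A}) : bool :=
  [forall u, (u != v) ==> (x u == s u)].

Definition pin_mass (p : {ffun V -> A} -> R) (v : V) (s : {ffun V -> A}) : R :=
  \sum_(x | agree_off v x s) p x.

Definition feasible (p : {ffun V -> A} -> R) v s : Prop := 0 < pin_mass p v s.

Definition cond_marg (p : {ffun V -> A} -> R) (v : V) (s : {ffun V -> A}) (a : A) : R :=
  (\sum_(x | agree_off v x s && (x v == a)) p x) / pin_mass p v s.

Definition le_off (le : rel A) (v : V) (s t : {ffun V -> A}) : Prop :=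
  forall u, u != v -> le (s u) (t u).

Definition le_conf (le : rel A) (x y : {ffun V -> A}) : Prop :=
  forall u, le (x u) (y u).

Definition monotone_coupling (le : rel A) (m1 m2 : A -> R) (c : A -> A -> R) : Prop :=
  [/\ forall a b, 0 <= c a b,
      forall a, \sum_b c a b = m1 a,
      forall b, \sum_a c a b = m2 b &
      forall a b, 0 < c a b -> le a b].

Definition monotone_system (le : rel A) (p : {ffun V -> A} -> R) : Prop :=
  forall (i : V) (s t : {ffun V -> A}),
    feasible p i s -> feasible p i t -> le_off le i s t ->
    exists c : A -> A -> R,
      monotone_coupling le (cond_marg p i s) (cond_marg p i t) c.

Definition in_supp (p : {ffun V -> A} -> R) (x : {ffun V -> A}) : bool := 0 < p x.

Definition glauber (p : {ffun V -> A} -> R) (X Y : {ffun V -> A}) : R :=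
  (#|V|%:R)^-1 * \sum_v (if agree_off v Y X then cond_marg p v X (Y v) else 0).

Definition stoch_monotone (le : rel A) (p : {ffun V -> A} -> R)
    (P : {ffun V -> A} -> {ffun V -> A} -> R) : Prop :=
  forall f : {ffun V -> A} -> R,
    (forall X, in_supp p X -> 0 <= f X) ->
    (forall X Y, in_supp p X -> in_supp p Y -> le_conf le X Y -> f X <= f Y) ->
    forall X Y, in_supp p X -> in_supp p Y -> le_conf le X Y ->
      \sum_(Z | in_supp p Z) P X Z * f Z <= \sum_(Z | in_supp p Z) P Y Z * f Z.

End Spin.

Definition monotone_system01 (R : realFieldType) (V : finType)
    (mu : {ffun V -> bool} -> R) : Prop :=
  forall (v : V) (s t : {ffun V -> bool}),
    feasible mu v s -> feasible mu v t -> le_off implb v s t ->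
    cond_marg mu v s true <= cond_marg mu v t true.

(* probability that a single coordinate b is lifted to a *)
Definition lift_kernel (R : realFieldType) (theta : R) (b : bool) (a : spin3) : R :=
  match b, a with
  | false, S0 => 1
  | true, S1 => theta
  | true, Sstar => 1 - theta
  | _, _ => 0
  end.

(* law of lift(X), X ~ mu, coordinates lifted independently *)
Definition lift_distr (R : realFieldType) (V : finType) (theta : R)
    (mu : {ffun V -> bool} -> R) (y : {ffun V -> spin3}) : R :=
  \sum_x mu x * \prod_v lift_kernel theta (x v) (y v).

(** The lift acts on each coordinate independently through the kernel [0 -> 0],
    [1 -> 1 or star]; the kernel weights of the pinned coordinates are positive (as
    [0 < theta < 1]) and cancel in the conditional law.  So the law of the lifted spin at [i]
    given a pinning [s] is [(1 - p) d_0 + p (theta d_1 + (1 - theta) d_star)], where [p] is the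
    conditional probability of a 1 under [mu] given [s] with every star replaced by 1.
    Monotonicity of [mu] says that [p] grows with the pinning, and two such laws with [p <= q]
    admit an explicit monotone coupling.  For the Glauber dynamics, couple the resampled spin
    at each site monotonically and compare the increasing test function termwise. *)
From mathcomp Require Import all_boot all_order all_algebra.
From mathcomp Require Import ring.
Import Order.TTheory GRing.Theory Num.Theory.
Local Open Scope ring_scope.
Set Implicit Arguments. Unset Strict Implicit.

Section SpinSystem.
Variables (R : realFieldType) (V A : finType).
Implicit Types (p : {ffun V -> A} -> R) (X Y s : {ffun V -> A}) (v : V) (a b : A).

Definition upd X v a : {ffun V -> A} := [ffun u => if u == v then a else X u].

Lemma upd_at X v a : upd X v a v = a.
Proof. by rewrite ffunE eqxx. Qed.

Lemma agree_off_upd v X Z a : (agree_off v Z X && (Z v == a)) = (Z == upd X v a).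
Proof.
apply/andP/eqP => [[/forallP agree /eqP <-]|->].
  apply/ffunP => u; rewrite ffunE; case: eqVneq => [->//|ne_uv].
  exact/eqP/(implyP (agree u)).
split; last by rewrite upd_at.
by apply/forallP => u; apply/implyP => ne_uv; rewrite ffunE (negbTE ne_uv).
Qed.

Lemma sum_agree_off v X (F : {ffun V -> A} -> R) :
  \sum_(Z | agree_off v Z X) F Z = \sum_a F (upd X v a).
Proof.
rewrite (partition_big (fun Z : {ffun V -> A} => Z v) predT) //=.
by apply: eq_bigr => a _; rewrite (big_pred1 (upd X v a)) // => Z; apply: agree_off_upd.
Qed.

Lemma pin_massE p v s : pin_mass p v s = \sum_a p (upd s v a).
Proof. exact: sum_agree_off. Qed.

Lemma cond_margE p v s a : cond_marg p v s a = p (upd s v a) / pin_mass p v s.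
Proof. by rewrite /cond_marg (big_pred1 (upd s v a)) // => Z; apply: agree_off_upd. Qed.

Lemma cond_marg_sum1 p v s : feasible p v s -> \sum_a cond_marg p v s a = 1.
Proof.
move=> feas; under eq_bigr do rewrite cond_margE.
by rewrite -mulr_suml -pin_massE divff // gt_eqF.
Qed.

Lemma cond_marg_ge0 p v s a : (forall x, 0 <= p x) -> 0 <= cond_marg p v s a.
Proof. by move=> p_ge0; rewrite cond_margE divr_ge0 // pin_massE sumr_ge0. Qed.

Lemma cond_marg_le1 p v s a :
  (forall x, 0 <= p x) -> feasible p v s -> cond_marg p v s a <= 1.
Proof.
move=> p_ge0 feas; rewrite -(cond_marg_sum1 feas) (bigD1 a) //= lerDl.
by apply: sumr_ge0 => b _; apply: cond_marg_ge0.
Qed.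

Lemma in_supp_cond_marg p v s a :
  feasible p v s -> 0 < cond_marg p v s a -> in_supp p (upd s v a).
Proof. by move=> feas; rewrite cond_margE pmulr_lgt0 // invr_gt0. Qed.

Lemma in_supp_feasible p v X : (forall x, 0 <= p x) -> in_supp p X -> feasible p v X.
Proof.
move=> p_ge0 supp; rewrite /feasible /pin_mass (bigD1 X) /=.
  by rewrite (lt_le_trans supp) // lerDl sumr_ge0.
by apply/forallP => u; apply/implyP.
Qed.

Lemma le_conf_upd (le : rel A) X Y v a b :
  le_conf le X Y -> le a b -> le_conf le (upd X v a) (upd Y v b).
Proof. by move=> le_XY le_ab u; rewrite !ffunE; case: eqP. Qed.

Lemma eq_monotone_coupling (le : rel A) (m1 m1' m2 m2' : A -> R) c :
  m1 =1 m1' -> m2 =1 m2' ->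
  monotone_coupling le m1 m2 c -> monotone_coupling le m1' m2' c.
Proof. by move=> e1 e2 [c_ge0 c_row c_col c_le]; split=> // x; rewrite -?e1 -?e2. Qed.

Lemma monotone_coupling_sum_le (le : rel A) (m1 m2 : A -> R) c (g h : A -> R) :
  monotone_coupling le m1 m2 c ->
  (forall a b, le a b -> 0 < m1 a -> 0 < m2 b -> g a <= h b) ->
  \sum_a m1 a * g a <= \sum_b m2 b * h b.
Proof.
case=> c_ge0 c_row c_col c_le le_gh.
have row_gt0 a b : 0 < c a b -> 0 < m1 a.
  by move=> c_gt0; rewrite -c_row (lt_le_trans c_gt0) // (bigD1 b) //= lerDl sumr_ge0.
have col_gt0 a b : 0 < c a b -> 0 < m2 b.
  by move=> c_gt0; rewrite -c_col (lt_le_trans c_gt0) // (bigD1 a) //= lerDl sumr_ge0.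
rewrite (eq_bigr (fun a => \sum_b c a b * g a)); last by move=> a _; rewrite -c_row mulr_suml.
rewrite [X in _ <= X](eq_bigr (fun b => \sum_a c a b * h b)); last first.
  by move=> b _; rewrite -c_col mulr_suml.
rewrite [X in _ <= X]exchange_big /=; apply: ler_sum => a _; apply: ler_sum => b _.
have := c_ge0 a b; rewrite le0r => /orP[/eqP->|c_gt0]; first by rewrite !mul0r.
by rewrite ler_wpM2l ?le_gh ?c_le ?(row_gt0 a b) ?(col_gt0 a b).
Qed.

Lemma glauber_sumE p (f : {ffun V -> A} -> R) X :
  \sum_(Z | in_supp p Z) glauber p X Z * f Z =
  (#|V|%:R)^-1 * \sum_v \sum_a cond_marg p v X a *
      (if in_supp p (upd X v a) then f (upd X v a) else 0).
Proof.
rewrite /glauber; under eq_bigr do rewrite -mulrA.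
rewrite -mulr_sumr; congr (_ * _).
under eq_bigr do rewrite mulr_suml.
rewrite exchange_big /=; apply: eq_bigr => v _.
transitivity (\sum_(Z | agree_off v Z X) cond_marg p v X (Z v) *
   (if in_supp p Z then f Z else 0)).
  rewrite big_mkcond [RHS]big_mkcond /=; apply: eq_bigr => Z _.
  by case: (in_supp p Z); case: (agree_off v Z X); rewrite ?mul0r ?mulr0.
by rewrite sum_agree_off; apply: eq_bigr => a _; rewrite upd_at.
Qed.

Theorem monotone_system_stoch_monotone (le : rel A) p :
  (forall x, 0 <= p x) -> monotone_system le p -> stoch_monotone le p (glauber p).
Proof.
move=> p_ge0 p_mon f _ f_mon X Y supp_X supp_Y le_XY.
rewrite !glauber_sumE; apply: ler_wpM2l; first by rewrite invr_ge0 ler0n.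
apply: ler_sum => v _.
have feas_X := in_supp_feasible v p_ge0 supp_X.
have feas_Y := in_supp_feasible v p_ge0 supp_Y.
have [c c_mon] := p_mon v X Y feas_X feas_Y (fun u _ => le_XY u).
apply: (monotone_coupling_sum_le c_mon) => a b le_ab m_a m_b.
have supp_a := in_supp_cond_marg feas_X m_a.
have supp_b := in_supp_cond_marg feas_Y m_b.
by rewrite supp_a supp_b f_mon //; apply: le_conf_upd.
Qed.

End SpinSystem.

Lemma eq_spin3 (a b : spin3) : (a == b) = (rank3 a == rank3 b)%N.
Proof. by apply/eqP/eqP; case: a; case: b. Qed.

Lemma big_spin3 (R : realFieldType) (F : spin3 -> R) :
  \sum_a F a = F S0 + F S1 + F Sstar.
Proof.
have enum_spin3 : perm_eq (index_enum spin3) [:: S0; S1; Sstar].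
  apply: uniq_perm; first exact: index_enum_uniq.
    by rewrite /= !inE !eq_spin3.
  by move=> a; rewrite mem_index_enum !inE !eq_spin3; case: a.
by rewrite (perm_big _ enum_spin3) !big_cons big_nil /= addr0 addrA.
Qed.

Section Lift.
Variables (R : realFieldType) (V : finType) (theta : R).
Hypotheses (theta_gt0 : 0 < theta) (theta_lt1 : theta < 1).
Implicit Types (mu : {ffun V -> bool} -> R) (s t : {ffun V -> spin3}) (i : V).

Local Notation k := (lift_kernel theta).

Definition unlift s : {ffun V -> bool} := [ffun u => s u != S0].

Definition lift_weight_off i s : R := \prod_(v | v != i) k (unlift s v) (s v).

Lemma lift_kernel_ge0 b a : 0 <= k b a.
Proof. by case: b; case: a; rewrite //= ?subr_ge0 ltW. Qed.

Lemma lift_kernel_sum1 b : \sum_a k b a = 1.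
Proof. by rewrite big_spin3; case: b => /=; ring. Qed.

Lemma lift_kernel_unlift b a : b != (a != S0) -> k b a = 0.
Proof. by case: b; case: a; rewrite ?eq_spin3. Qed.

Lemma lift_weight_off_gt0 i s : 0 < lift_weight_off i s.
Proof.
by apply: prodr_gt0 => v _; rewrite ffunE; case: (s v); rewrite ?eq_spin3 //= subr_gt0.
Qed.

Lemma prod_lift_kernel_upd (x : {ffun V -> bool}) i s a :
  \prod_v k (x v) (upd s i a v) =
  if agree_off i x (unlift s) then k (x i) a * lift_weight_off i s else 0.
Proof.
rewrite (bigD1 i) //= upd_at.
under eq_bigr => v ne_vi do rewrite ffunE (negbTE ne_vi).
case: ifP => [/forallP agree | /negbT /forallPn [u]].
  congr (_ * _); apply: eq_bigr => v ne_vi.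
  by rewrite (eqP (implyP (agree v) ne_vi)).
rewrite negb_imply ffunE => /andP[ne_ui x_u].
by rewrite (bigD1 u) //= (lift_kernel_unlift x_u) mul0r mulr0.
Qed.

Lemma lift_distr_upd mu i s a :
  lift_distr theta mu (upd s i a) =
  lift_weight_off i s * \sum_b mu (upd (unlift s) i b) * k b a.
Proof.
rewrite /lift_distr; under eq_bigr do rewrite prod_lift_kernel_upd fun_if mulr0.
rewrite -big_mkcond sum_agree_off mulr_sumr; apply: eq_bigr => b _.
by rewrite upd_at mulrA mulrC.
Qed.

Lemma pin_mass_lift mu i s :
  pin_mass (lift_distr theta mu) i s = lift_weight_off i s * pin_mass mu i (unlift s).
Proof.
rewrite !pin_massE; under eq_bigr do rewrite lift_distr_upd.
rewrite -mulr_sumr exchange_big /=; congr (_ * _); apply: eq_bigr => b _.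
by rewrite -mulr_sumr lift_kernel_sum1 mulr1.
Qed.

Lemma cond_marg_lift mu i s a :
  cond_marg (lift_distr theta mu) i s a = \sum_b cond_marg mu i (unlift s) b * k b a.
Proof.
rewrite cond_margE lift_distr_upd pin_mass_lift -mulf_div divff ?mul1r; last first.
  by rewrite gt_eqF ?lift_weight_off_gt0.
by rewrite mulr_suml; apply: eq_bigr => b _; rewrite cond_margE mulrAC.
Qed.

Lemma cond_marg_lift_bernoulli mu i s a :
  feasible mu i (unlift s) ->
  cond_marg (lift_distr theta mu) i s a =
  (1 - cond_marg mu i (unlift s) true) * k false a + cond_marg mu i (unlift s) true * k true a.
Proof.
move=> feas; have := cond_marg_sum1 feas; rewrite big_bool => sum1.
rewrite cond_marg_lift big_bool /=.
have -> : cond_marg mu i (unlift s) false = 1 - cond_marg mu i (unlift s) true.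
  by rewrite -sum1 addrC addKr.
by rewrite addrC.
Qed.

Lemma feasible_unlift mu i s :
  feasible (lift_distr theta mu) i s -> feasible mu i (unlift s).
Proof. by rewrite /feasible pin_mass_lift pmulr_rgt0 // lift_weight_off_gt0. Qed.

Lemma le_off_unlift i s t : le_off le3 i s t -> le_off implb i (unlift s) (unlift t).
Proof.
move=> le_st u ne_ui; rewrite !ffunE; move: (le_st u ne_ui); rewrite /le3.
by case: (s u); case: (t u); rewrite ?eq_spin3.
Qed.

Lemma lift_distr_ge0 mu : (forall x, 0 <= mu x) -> forall y, 0 <= lift_distr theta mu y.
Proof.
move=> mu_ge0 y; apply: sumr_ge0 => x _; rewrite mulr_ge0 //.
by apply: prodr_ge0 => v _; apply: lift_kernel_ge0.
Qed.

(* Moves the mass [q - p] from [0] to [1]/[star] in the lifted proportions, and couples the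
   common mass [p] on the diagonal. *)
Definition lift_coupling (p q : R) (a b : spin3) : R :=
  match a, b with
  | S0, S0 => 1 - q
  | S0, S1 => theta * (q - p)
  | S0, Sstar => (1 - theta) * (q - p)
  | S1, S1 => theta * p
  | Sstar, Sstar => (1 - theta) * p
  | _, _ => 0
  end.

Lemma lift_coupling_monotone (p q : R) :
  0 <= p -> p <= q -> q <= 1 ->
  monotone_coupling le3 (fun a => (1 - p) * k false a + p * k true a)
                        (fun b => (1 - q) * k false b + q * k true b) (lift_coupling p q).
Proof.
move=> p_ge0 le_pq q_le1.
split.
- by case; case; rewrite //= ?subr_ge0 // mulr_ge0 ?subr_ge0 // ltW.
- by move=> a; rewrite big_spin3; case: a => /=; ring.
- by move=> b; rewrite big_spin3; case: b => /=; ring.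
- by case; case; rewrite //= ltxx.
Qed.

Theorem lift_monotone_system mu :
  (forall x, 0 <= mu x) -> monotone_system01 mu -> monotone_system le3 (lift_distr theta mu).
Proof.
move=> mu_ge0 mu_mon i s t feas_s feas_t le_st.
have feas_s' := feasible_unlift feas_s; have feas_t' := feasible_unlift feas_t.
exists (lift_coupling (cond_marg mu i (unlift s) true) (cond_marg mu i (unlift t) true)).
apply: eq_monotone_coupling (lift_coupling_monotone _ _ _).
- by move=> a; rewrite cond_marg_lift_bernoulli.
- by move=> b; rewrite cond_marg_lift_bernoulli.
- exact: cond_marg_ge0.
- exact: mu_mon (le_off_unlift le_st).
- exact: cond_marg_le1.
Qed.

End Lift.

Theorem lemma5p1 (R : realFieldType) (V : finType)
    (mu : {ffun V -> bool} -> R) (theta : R) :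
  is_distr mu -> monotone_system01 mu -> 0 < theta < 1 ->
  monotone_system le3 (lift_distr theta mu) /\
  stoch_monotone le3 (lift_distr theta mu) (glauber (lift_distr theta mu)).
Proof.
move=> [mu_ge0 _] mu_mon /andP[theta_gt0 theta_lt1].
have lift_mon := lift_monotone_system theta_gt0 theta_lt1 mu_ge0 mu_mon.
split=> //; apply: monotone_system_stoch_monotone lift_mon.
exact: lift_distr_ge0.
Qed.
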